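(* Let $B$ be a finite set of Boolean functions and $\langle W,D\rangle$ a $B$-default theory. If $[B]\subseteq \mathrm{R}_1$, then $\langle W,D\rangle$ has a unique stable extension. If $[B]\subseteq\mathrm{M}$, then $\langle W,D\rangle$ has at most one stable extension.
   Context: A clone is a set of Boolean functions containing all projections and closed under composition; $[B]$ is the smallest clone containing $B$. $\mathrm{R}_1$ is the clone of $1$-reproducing functions ($f(1,\dots,1)=1$); $\mathrm{M}$ is the clone of monotone functions. For a finite set $B$ of Boolean functions (possibly including constants $0,1$), a $B$-formula uses only connectives from $B$. A $B$-default theory $\langle W,D\rangle$ consists of a finite set $W$ of $B$-formulae and a finite set $D$ of rules $\frac{\alpha:\beta}{\gamma}$ with $B$-formulae $\alpha,\beta,\gamma$. With $\mathrm{Th}(A)=\{\varphi\mid A\models\varphi\}$, for a set $E$ of formulae $\Gamma(E)$ is the smallest set with $W\subseteq\Gamma(E)$, $\Gamma(E)=\mathrm{Th}(\Gamma(E))$, and $\gamma\in\Gamma(E)$ whenever $\frac{\alpha:\beta}{\gamma}\in D$, $\alpha\in\Gamma(E)$, $\neg\beta\notin E$. A stable extension is a fixed point $E=\Gamma(E)$. *)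

From Stdlib Require List.
From mathcomp Require Import all_boot.
Set Implicit Arguments. Unset Strict Implicit. Unset Printing Implicit Defensive.

(* A Boolean function: an arity n together with a map {0,1}^n -> {0,1}.
   Constants 0,1 are the 0-ary functions. *)
Definition boolfun : Type := {n : nat & n.-tuple bool -> bool}.
Definition mkbf n (f : n.-tuple bool -> bool) : boolfun := existT _ n f.

Inductive clone (B : list boolfun) : forall n, (n.-tuple bool -> bool) -> Prop :=
| clone_base n (f : n.-tuple bool -> bool) : List.In (mkbf f) B -> clone B f
| clone_proj n (i : 'I_n) : clone B (fun x : n.-tuple bool => tnth x i)
| clone_comp m n (f : m.-tuple bool -> bool) (g : 'I_m -> n.-tuple bool -> bool) :
    clone B f -> (forall i, clone B (g i)) ->
    clone B (fun x : n.-tuple bool => f [tuple g i x | i < m])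
| clone_ext n (f f' : n.-tuple bool -> bool) :
    clone B f -> (forall x, f x = f' x) -> clone B f'.

Definition R1 n (f : n.-tuple bool -> bool) : Prop := f [tuple true | _ < n] = true.
Definition Mono n (f : n.-tuple bool -> bool) : Prop :=
  forall x y : n.-tuple bool, (forall i, tnth x i <= tnth y i) -> f x <= f y.

Definition clone_sub_R1 (B : list boolfun) : Prop :=
  forall n (f : n.-tuple bool -> bool), clone B f -> R1 f.
Definition clone_sub_M (B : list boolfun) : Prop :=
  forall n (f : n.-tuple bool -> bool), clone B f -> Mono f.

Inductive formula : Type :=
| Var : nat -> formula
| App : boolfun -> seq formula -> formula.

Fixpoint eval (v : nat -> bool) (phi : formula) : bool :=
  match phi with
  | Var x => v x
  | App c args =>
      let vs := map (eval v) args in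
      (projT2 c) [tuple nth false vs i | i < projT1 c]
  end.

Inductive Bformula (B : list boolfun) : formula -> Prop :=
| Bf_var x : Bformula B (Var x)
| Bf_app c args : List.In c B -> size args = projT1 c ->
    (forall psi, List.In psi args -> Bformula B psi) -> Bformula B (App c args).

Definition negf : boolfun := mkbf (fun t : 1.-tuple bool => ~~ tnth t ord0).
Definition Neg (phi : formula) : formula := App negf [:: phi].

Definition fset := formula -> Prop.

Definition entails (A : fset) (phi : formula) : Prop :=
  forall v : nat -> bool, (forall psi, A psi -> eval v psi) -> eval v phi.
Definition Th (A : fset) : fset := entails A.

Definition seteq (A A' : fset) : Prop := forall phi, A phi <-> A' phi.

Record rule := Rule { prereq : formula; justif : formula; concl : formula }.

Definition Bdefault_theory (B : list boolfun) (W : list formula) (D : list rule) :=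
  (forall phi, List.In phi W -> Bformula B phi) /\
  (forall d, List.In d D ->
     [/\ Bformula B (prereq d), Bformula B (justif d) & Bformula B (concl d)]).

Definition Gamma_closed (W : list formula) (D : list rule) (E S : fset) : Prop :=
  [/\ (forall phi, List.In phi W -> S phi),
      seteq (Th S) S &
      (forall d, List.In d D -> S (prereq d) -> ~ E (Neg (justif d)) -> S (concl d))].

Definition Gamma (W : list formula) (D : list rule) (E : fset) : fset :=
  fun phi => forall S, Gamma_closed W D E S -> S phi.

Definition stable_extension (W : list formula) (D : list rule) (E : fset) : Prop :=
  seteq E (Gamma W D E).

From Stdlib Require List.
From Stdlib Require Import Classical.
From mathcomp Require Import all_boot.
Set Implicit Arguments. Unset Strict Implicit. Unset Printing Implicit Defensive.

(* Every B-formula is built from connectives of B, so a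
   relation on truth values that is preserved by all connectives of B is
   preserved by every B-formula, seen as a function of its valuation.
   - If [B] is included in R_1, the relation "the left value is true" is
     preserved, so every B-formula holds at the all-true valuation vtop.
     Then no Gamma(E) can contain the negation of a justification, so
     Gamma(E) = Gamma(empty) for every E and Gamma(empty) is the unique
     stable extension.
   - If [B] is included in M, the relation <= is preserved, so B-formulae
     are monotone.  A consistent stable extension E is then satisfied by
     vtop, and it contains the negation of a justification b exactly when b
     is false at vtop; hence E = Gamma(Ec) for a set Ec fixed in advance.
     An inconsistent stable extension contains every formula, and in that
     case antitonicity of Gamma forces every other extension to be total too. *)

Lemma In_nth (T : Type) (s : seq T) i (x0 : T) : i < size s -> List.In (nth x0 s i) s.
Proof.
elim: s i => [|a s IH] [|i] //= Hi; first by left.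
by right; apply: IH.
Qed.

Lemma eval_Neg v phi : eval v (Neg phi) = ~~ eval v phi.
Proof. by rewrite /= tnth_mktuple. Qed.

Definition preserves (R : rel bool) n (f : n.-tuple bool -> bool) : Prop :=
  forall x y : n.-tuple bool, (forall i, R (tnth x i) (tnth y i)) -> R (f x) (f y).

Lemma eval_preserves B (R : rel bool) (v w : nat -> bool) phi :
  (forall c, List.In c B -> preserves R (projT2 c)) ->
  (forall x, R (v x) (w x)) -> Bformula B phi -> R (eval v phi) (eval w phi).
Proof.
move=> HB Hvw; elim=> [x|[n f] args Hin Hsz _ IH] //=.
apply: (HB _ Hin) => i; rewrite !tnth_mktuple.
have Hi : i < size args by rewrite Hsz.
by rewrite !(nth_map (Var 0)) //; apply: IH; apply: In_nth.
Qed.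

Definition vtop : nat -> bool := fun _ => true.

Lemma R1_preserves_true n (f : n.-tuple bool -> bool) :
  R1 f -> preserves (fun a _ => a) f.
Proof.
move=> Hf x y Hx; suff -> : x = [tuple true | _ < n] by [].
by apply: eq_from_tnth => i; rewrite tnth_mktuple; apply: Hx.
Qed.

Lemma R1_Bformula_top B phi : clone_sub_R1 B -> Bformula B phi -> eval vtop phi.
Proof.
move=> HR Hphi; apply: (@eval_preserves B (fun a _ => a) vtop vtop) => // -[n f] Hin.
by apply: R1_preserves_true; apply: HR; apply: clone_base.
Qed.

Lemma Mono_Bformula B phi (v w : nat -> bool) :
  clone_sub_M B -> Bformula B phi ->
  (forall x, v x <= w x) -> eval v phi <= eval w phi.
Proof.
move=> HM Hphi Hvw; apply: (@eval_preserves B (fun a b => a <= b)) => // -[n f] Hin.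
by apply: HM; apply: clone_base.
Qed.

Lemma Mono_Bformula_top B phi v :
  clone_sub_M B -> Bformula B phi -> eval v phi -> eval vtop phi.
Proof.
move=> HM Hphi Hv.
have := @Mono_Bformula B phi v vtop HM Hphi (fun x => leq_b1 _).
by rewrite Hv; case: (eval vtop phi).
Qed.

Lemma Mono_Bformula_false_top B phi v :
  clone_sub_M B -> Bformula B phi -> eval vtop phi = false -> eval v phi = false.
Proof.
move=> HM Hphi Htop.
by apply/negbTE/negP => Hv; rewrite (Mono_Bformula_top HM Hphi Hv) in Htop.
Qed.

Section DefaultLogic.
Variables (W : list formula) (D : list rule).

Lemma Gamma_self E : Gamma_closed W D E (Gamma W D E).
Proof.
split.
- by move=> phi Hin S [HW _ _]; apply: HW.
- move=> phi; split; last by move=> Hphi v Hv; apply: Hv.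
  move=> Hth S HS; case: (HS) => _ HT _; apply/HT => v Hv.
  by apply: Hth => psi Hpsi; apply: Hv; apply: Hpsi.
- by move=> d Hd Hp Hn S HS; case: (HS) => _ _ HR; apply: HR => //; apply: Hp.
Qed.

Lemma Gamma_sound E (v : nat -> bool) :
  (forall phi, List.In phi W -> eval v phi) ->
  (forall d, List.In d D -> Gamma W D E (concl d) -> eval v (concl d)) ->
  forall phi, Gamma W D E phi -> eval v phi.
Proof.
move=> HW HD phi Hg; have [GW GT GR] := Gamma_self E.
suff [] : Gamma W D E phi /\ eval v phi by [].
apply: (Hg (fun psi => Gamma W D E psi /\ eval v psi)); split.
- by move=> psi Hin; split; [apply: GW | apply: HW].
- move=> psi; split; last by move=> Hpsi w Hw; apply: Hw.
  move=> Hth; split; last by apply: Hth => chi [].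
  by apply/GT => w Hw; apply: Hth => chi [Hchi _]; apply: Hw.
- by move=> d Hd [Hp _] Hn; have Hc := GR d Hd Hp Hn; split => //; apply: HD.
Qed.

Lemma Gamma_ext E E' :
  (forall d, List.In d D -> (E (Neg (justif d)) <-> E' (Neg (justif d)))) ->
  seteq (Gamma W D E) (Gamma W D E').
Proof.
move=> H phi; split => Hg S [HW HT HR]; apply: Hg; split => // d Hd Hp Hn;
  by apply: HR => // He; apply: Hn; apply/(H d Hd).
Qed.

(* Gamma is antitone: more beliefs block more rules. *)
Lemma Gamma_anti E E' : (forall phi, E phi -> E' phi) ->
  forall phi, Gamma W D E' phi -> Gamma W D E phi.
Proof.
move=> H phi Hg S [HW HT HR]; apply: Hg; split => // d Hd Hp Hn.
by apply: HR => // He; apply: Hn; apply: H.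
Qed.

Lemma stable_closed E : stable_extension W D E -> Gamma_closed W D E E.
Proof.
move=> HE; case: (Gamma_self E) => HW HT HR; split.
- by move=> phi Hin; apply/HE; apply: HW.
- move=> phi; split; last by move=> Hphi v Hv; apply: Hv.
  move=> Hth; apply/HE; apply/HT => v Hv; apply: Hth => psi Hpsi.
  by apply: Hv; apply/HE.
- by move=> d Hd Hp Hn; apply/HE; apply: HR => //; apply/HE.
Qed.

Lemma stable_no_model_total E :
  stable_extension W D E -> ~ (exists v, forall psi, E psi -> eval v psi) ->
  forall phi, E phi.
Proof.
move=> HE Hno phi; have [_ HT _] := stable_closed HE.
by apply/HT => v Hv; exfalso; apply: Hno; exists v.
Qed.

Lemma unblocked_unique_extension :
  (forall E d, List.In d D -> ~ Gamma W D E (Neg (justif d))) ->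
  stable_extension W D (Gamma W D (fun _ => False)) /\
  forall E, stable_extension W D E -> seteq E (Gamma W D (fun _ => False)).
Proof.
move=> Hfree.
have Hempty E : (forall d, List.In d D -> ~ E (Neg (justif d))) ->
    seteq (Gamma W D E) (Gamma W D (fun _ => False)).
  by move=> HE; apply: Gamma_ext => d Hd; split => // /(HE d Hd).
split; first by move=> phi; rewrite (Hempty _ (Hfree _)).
move=> E HE phi; rewrite (HE phi) Hempty // => d Hd /HE.
exact: Hfree.
Qed.

Lemma at_most_one_extension (Ec : fset) :
  (forall E, stable_extension W D E ->
     (forall phi, E phi) \/ seteq E (Gamma W D Ec)) ->
  forall E1 E2, stable_extension W D E1 -> stable_extension W D E2 -> seteq E1 E2.
Proof.
move=> Hdich.
have Htotal E1 E2 : stable_extension W D E1 -> (forall phi, E1 phi) ->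
    seteq E2 (Gamma W D Ec) -> forall phi, E2 phi.
  move=> H1 Hall H2 phi; apply/H2; apply: (@Gamma_anti Ec E1) => //.
  exact/H1.
move=> E1 E2 H1 H2.
case: (Hdich _ H1) => [T1|C1]; case: (Hdich _ H2) => [T2|C2] phi.
- by split.
- by have := Htotal _ _ H1 T1 C2 phi.
- by have := Htotal _ _ H2 T2 C1 phi.
- by rewrite C1 C2.
Qed.

End DefaultLogic.

(* In the 1-reproducing case, vtop satisfies every Gamma(E) but no negation
   of a B-formula, so no rule is ever blocked. *)
Lemma R1_unblocked B W D : Bdefault_theory B W D -> clone_sub_R1 B ->
  forall E d, List.In d D -> ~ Gamma W D E (Neg (justif d)).
Proof.
move=> [HWB HDB] HR E d Hd Hneg.
have Htop : eval vtop (Neg (justif d)).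
  apply: (Gamma_sound (E := E)) Hneg.
  - by move=> phi Hin; apply: R1_Bformula_top HR (HWB _ Hin).
  - by move=> d' Hd' _; case: (HDB d' Hd') => _ _ Hc; apply: R1_Bformula_top HR Hc.
case: (HDB d Hd) => _ Hj _.
by rewrite eval_Neg (R1_Bformula_top HR Hj) in Htop.
Qed.

Section Monotone.
Variables (B : list boolfun) (W : list formula) (D : list rule).
Hypotheses (HBD : Bdefault_theory B W D) (HM : clone_sub_M B).

(* The negations of formulae false at vtop: the negated justifications a
   consistent stable extension contains in the monotone case. *)
Definition refuted_at_top : fset :=
  fun phi => exists b, phi = Neg b /\ eval vtop b = false.

Lemma stable_model_top E v : stable_extension W D E ->
  (forall psi, E psi -> eval v psi) -> forall psi, E psi -> eval vtop psi.
Proof.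
case: HBD => HWB HDB HE Hv psi Hpsi; have [HW _ _] := stable_closed HE.
apply: (Gamma_sound (E := E)); last exact/HE.
- by move=> phi Hin; apply: Mono_Bformula_top HM (HWB _ Hin) (Hv _ (HW _ Hin)).
- move=> d Hd /HE Hc; case: (HDB d Hd) => _ _ Hcb.
  exact: Mono_Bformula_top HM Hcb (Hv _ Hc).
Qed.

Lemma stable_consistent_determined E v : stable_extension W D E ->
  (forall psi, E psi -> eval v psi) -> seteq E (Gamma W D refuted_at_top).
Proof.
move=> HE Hv; have Htop := stable_model_top HE Hv.
have [_ HT _] := stable_closed HE.
have Hjust d : List.In d D ->
    E (Neg (justif d)) <-> refuted_at_top (Neg (justif d)).
  move=> Hd; case: HBD => _ /(_ d Hd) [_ Hj _]; split.
  - move=> Hn; exists (justif d); split => //.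
    by have := Htop _ Hn; rewrite eval_Neg => /negbTE.
  - move=> [b [[Eb] Hb]]; subst b; apply/HT => w _.
    by rewrite eval_Neg (Mono_Bformula_false_top w HM Hj Hb).
move=> phi; rewrite (HE phi); exact: Gamma_ext Hjust phi.
Qed.

Lemma Mono_stable_dichotomy E : stable_extension W D E ->
  (forall phi, E phi) \/ seteq E (Gamma W D refuted_at_top).
Proof.
move=> HE; case: (classic (exists v, forall psi, E psi -> eval v psi)).
- by move=> [v Hv]; right; apply: stable_consistent_determined Hv.
- by move=> Hno; left; apply: stable_no_model_total HE Hno.
Qed.

End Monotone.

Theorem lemma5p2 (B : list boolfun) (W : list formula) (D : list rule) :
  Bdefault_theory B W D ->
  (clone_sub_R1 B ->
     exists E, stable_extension W D E /\
       forall E', stable_extension W D E' -> seteq E' E) /\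
  (clone_sub_M B ->
     forall E1 E2, stable_extension W D E1 -> stable_extension W D E2 -> seteq E1 E2).
Proof.
move=> HBD; split.
- move=> HR; exists (Gamma W D (fun _ => False)).
  exact: unblocked_unique_extension (R1_unblocked HBD HR).
- move=> HM; exact: at_most_one_extension (Mono_stable_dichotomy HBD HM).
Qed.
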